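(* Let $K\subseteq\mathbb{R}^m$ be closed, $f:\mathbb{R}^n\to\mathbb{R}$, $G:\mathbb{R}^n\to\mathbb{R}^m$, $\Psi=\{x\in\mathbb{R}^n:G(x)\in K\}$ and let $x^*\in\Psi$. Suppose that $f$ is second-order epi-regular at $x^*$ and $G$ is second-order gph-regular at $x^*$. Suppose that MSCQ for $\Psi$ holds at $x^*$ and that $K$ is outer second-order regular at $G(x^* )$ in every direction $G'(x^*;d)\in\mathcal{T}_K(G(x^* ))$. Assume that for every direction $d$ with $G'(x^*;d)\in\mathcal{T}_K(G(x^* ))$ we have $f'(x^*;d)\ge0$, and that for every $d\in\mathcal{C}(x^* )\setminus\{0\}$ the optimization problem $$\min_w\ f''(x^*;d,w)\quad\text{s.t. } G''(x^*;d,w)\in\mathcal{T}^2_K(G(x^* );G'(x^*;d))$$ has a positive optimal objective value, where $\mathcal{C}(x^* ):=\{d\in\mathbb{R}^n: G'(x^*;d)\in\mathcal{T}_K(G(x^* )),\ f'(x^*;d)\le0\}$. Then the second-order growth condition holds at $x^*$ for the problem $\min f(x)$ s.t. $G(x)\in K$, i.e., there exist $c>0$ and a neighborhood $N$ of $x^*$ with $f(x)\ge f(x^* )+c\|x-x^*\|^2$ for all $x\in\Psi\cap N$.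
   Context: Definitions. For $g:\mathbb{R}^n\to\mathbb{R}^k$: $g'(x;d)=\lim_{t\downarrow0}(g(x+td)-g(x))/t$; $g$ is second-order directionally differentiable at $x$ if for every $d$, $g'(x;d)$ exists and $g''(x;d,w):=\lim_{t\downarrow0}\frac{g(x+td+\frac12t^2w)-g(x)-tg'(x;d)}{\frac12t^2}$ exists for all $w$. $g$ is second-order gph-regular (resp. epi-regular, for $k=1$) at $x^*$ if $g$ is locally Lipschitz continuous and second-order directionally differentiable at $x^*$ and for every $d\in\mathbb{R}^n$ and every path $w:\mathbb{R}_+\to\mathbb{R}^n$ with $tw(t)\to0$ as $t\downarrow0$ there is $r$ with $\|r(t)\|/t^2\to0$ as $t\downarrow0$ such that $g(x^*+td+\frac12t^2w(t))=g(x^* )+tg'(x^*;d)+\frac12t^2g''(x^*;d,w(t))+r(t)$ (resp. ''$\ge$'' instead of ''$=$'') for $t\ge0$. For a set $C$ and $x^*\in C$: tangent cone $\mathcal{T}_C(x^* )=\{d:\exists t_k\downarrow0,d^k\to d, x^*+t_kd^k\in C\}$; for $d\in\mathcal{T}_C(x^* )$, outer second-order tangent set $\mathcal{T}^2_C(x^*;d)=\{w:\exists t_k\downarrow0,w^k\to w, x^*+t_kd+\frac12t_k^2w^k\in C\}$; $C$ is outer second-order regular at $x^*$ in direction $d$ if for every sequence $x^*+t_kd+\frac12t_k^2w^k\in C$ with $t_k\downarrow0$, $t_kw^k\to0$, one has $\mathrm{dist}(w^k,\mathcal{T}^2_C(x^*;d))\to0$. MSCQ for $\Psi$ holds at $x^*$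 if there exist a neighborhood $U$ of $x^*$ and $\kappa>0$ with $\mathrm{dist}(x,\Psi)\le\kappa\,\mathrm{dist}(G(x),K)$ for all $x\in U$. The optimal value of a problem is the infimum of its objective over its feasible set. *)

From HB Require Import structures.
From mathcomp Require Import all_boot all_order all_algebra.
From mathcomp Require Import all_classical all_reals all_analysis.
Set Implicit Arguments. Unset Strict Implicit. Unset Printing Implicit Defensive.
Import Order.TTheory GRing.Theory Num.Theory.
Import numFieldNormedType.Exports.
Local Open Scope classical_set_scope.
Local Open Scope ring_scope.

Section Defs.
Context {R : realType}.

Definition dq1 {V W : normedModType R} (g : V -> W) (x d : V) : R -> W :=
  fun t => t^-1 *: (g (x + t *: d) - g x).

Definition has_dir_deriv {V W : normedModType R} (g : V -> W) (x d : V) (l : W) :=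
  dq1 g x d t @[t --> 0^'+] --> l.

Definition dir_deriv {V W : normedModType R} (g : V -> W) (x d : V) : W :=
  lim (dq1 g x d t @[t --> 0^'+]).

Definition dq2 {V W : normedModType R} (g : V -> W) (x d w : V) : R -> W :=
  fun t => (2 / t ^+ 2) *:
    (g (x + t *: d + (2^-1 * t ^+ 2) *: w) - g x - t *: dir_deriv g x d).

Definition dir_deriv2 {V W : normedModType R} (g : V -> W) (x d w : V) : W :=
  lim (dq2 g x d w t @[t --> 0^'+]).

Definition sodd {V W : normedModType R} (g : V -> W) (x : V) :=
  forall d, has_dir_deriv g x d (dir_deriv g x d) /\
    forall w, dq2 g x d w t @[t --> 0^'+] --> dir_deriv2 g x d w.

Definition loc_lipschitz_at {V W : normedModType R} (g : V -> W) (x : V) :=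
  exists U, nbhs x U /\ exists L : R,
    forall y z, U y -> U z -> `|g y - g z| <= L * `|y - z|.

Definition adm_path {V : normedModType R} (w : R -> V) :=
  t *: w t @[t --> 0^'+] --> (0 : V).

Definition small_o2 {W : normedModType R} (r : R -> W) :=
  (t ^+ 2)^-1 *: r t @[t --> 0^'+] --> (0 : W).

Definition so_gph_regular {V W : normedModType R} (g : V -> W) (x : V) :=
  loc_lipschitz_at g x /\ sodd g x /\
  forall (d : V) (w : R -> V), adm_path w ->
    exists r : R -> W, small_o2 r /\
      forall t, 0 <= t ->
        g (x + t *: d + (2^-1 * t ^+ 2) *: w t) =
        g x + t *: dir_deriv g x d + (2^-1 * t ^+ 2) *: dir_deriv2 g x d (w t) + r t.

Definition so_epi_regular {V : normedModType R} (g : V -> R^o) (x : V) :=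
  loc_lipschitz_at g x /\ sodd g x /\
  forall (d : V) (w : R -> V), adm_path w ->
    exists r : R -> R^o, small_o2 r /\
      forall t, 0 <= t ->
        g (x + t *: d + (2^-1 * t ^+ 2) *: w t) >=
        g x + t * dir_deriv g x d + (2^-1 * t ^+ 2) * dir_deriv2 g x d (w t) + r t.

Definition tangent_cone {V : normedModType R} (C : set V) (x : V) : set V :=
  [set d | exists (t : nat -> R) (dk : nat -> V),
     (forall k, 0 < t k) /\ t @ \oo --> 0 /\ dk @ \oo --> d /\
     forall k, C (x + t k *: dk k)].

Definition tangent2 {V : normedModType R} (C : set V) (x d : V) : set V :=
  [set w | exists (t : nat -> R) (wk : nat -> V),
     (forall k, 0 < t k) /\ t @ \oo --> 0 /\ wk @ \oo --> w /\
     forall k, C (x + t k *: d + (2^-1 * t k ^+ 2) *: wk k)].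

(* distance to a set, in the extended reals (+oo for the empty set) *)
Definition edist {V : normedModType R} (x : V) (S : set V) : \bar R :=
  ereal_inf [set (`|x - y|)%:E | y in S].

Definition outer_so_regular {V : normedModType R} (C : set V) (x d : V) :=
  forall (t : nat -> R) (wk : nat -> V),
    (forall k, 0 < t k) -> t @ \oo --> 0 ->
    (fun k => t k *: wk k) @ \oo --> (0 : V) ->
    (forall k, C (x + t k *: d + (2^-1 * t k ^+ 2) *: wk k)) ->
    (fun k => edist (wk k) (tangent2 C x d)) @ \oo --> 0%E.

Definition MSCQ {V W : normedModType R} (G : V -> W) (K : set W) (xs : V) :=
  exists U, nbhs xs U /\ exists kappa : R, 0 < kappa /\
    forall x, U x ->
      (edist x [set y | K (G y)] <= kappa%:E * edist (G x) K)%E.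

Definition crit_cone {V W : normedModType R} (f : V -> R^o) (G : V -> W)
    (K : set W) (xs : V) : set V :=
  [set d | tangent_cone K (G xs) (dir_deriv G xs d) /\ dir_deriv f xs d <= 0].

Definition so_value {V W : normedModType R} (f : V -> R^o) (G : V -> W)
    (K : set W) (xs d : V) : \bar R :=
  ereal_inf [set (dir_deriv2 f xs d w)%:E | w in
    [set w | tangent2 K (G xs) (dir_deriv G xs d) (dir_deriv2 G xs d w)]].

End Defs.

From Pilot Require Import Defs.
From HB Require Import structures.
From mathcomp Require Import all_boot all_order all_algebra.
From mathcomp Require Import all_classical all_reals all_analysis.
From mathcomp Require Import ring lra.
Import Order.TTheory GRing.Theory Num.Theory.
Import numFieldNormedType.Exports.
Local Open Scope classical_set_scope.
Local Open Scope ring_scope.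

(* If second-order growth fails, there are feasible points x_k -> xs with
   f x_k < f xs + |x_k - xs|^2 / (k+1).  Writing x_k = xs + t_k d_k with unit d_k,
   a subsequence d_k converges to some d, and Lipschitz continuity makes d a
   nonzero critical direction.  With w_k = 2 (d_k - d) / t_k one has
   x_k = xs + t_k d + t_k^2/2 w_k and t_k w_k -> 0.  Epi-regularity of f then
   bounds f''(xs; d, w_k) by a null sequence, while gph-regularity of G and outer
   second-order regularity of K put G''(xs; d, w_k) within o(1) of
   T^2_K(G xs; G'(xs; d)).  By MSCQ, each w_k can be moved by
   O(dist(G''(xs; d, w_k), T^2)) to a feasible point of the second-order problem,
   and f'' is Lipschitz in w, so the optimal value in direction d is <= 0,
   contradicting its assumed positivity. *)

Section sequences.
Context {R : realType}.

Lemma cvg_pos_at_right {t : nat -> R} : (forall k, 0 < t k) -> t @ \oo --> 0 ->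
  t @ \oo --> 0^'+.
Proof.
move=> t_gt0 t0 A A0.
have : \forall k \near \oo, 0 < t k -> A (t k) := t0 _ A0.
by apply: filterS => k /(_ (t_gt0 k)).
Qed.

Lemma cvg_dist_le {T : Type} {F : set_system T} {FF : Filter F} {V : normedModType R}
    {a : T -> V} {l : V} {b : T -> R} :
  b @ F --> 0 -> (\forall i \near F, `|a i - l| <= b i) -> a @ F --> l.
Proof.
move=> /cvgr0Pnorm_le b0 ab; apply/cvgrPdist_le => e e0.
near=> i; rewrite distrC.
have abi : `|a i - l| <= b i by near: i.
by apply: (le_trans abi); apply: le_trans (ler_norm _) _; near: i; exact: b0.
Unshelve. all: by end_near.
Qed.

Lemma increasing_nat_ge (phi : nat -> nat) : (forall i, (phi i < phi i.+1)%N) ->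
  forall i, (i <= phi i)%N.
Proof. by move=> phiS; elim=> // i IH; exact: leq_ltn_trans IH (phiS i). Qed.

Lemma cvg_subseq {X : Type} (u : nat -> X) (F : set_system X) (phi : nat -> nat) :
  (forall i, (phi i < phi i.+1)%N) -> u @ \oo --> F -> (u \o phi) @ \oo --> F.
Proof.
move=> phiS u_F; apply: (cvg_comp _ _ _ u_F) => A [N _ NA]; exists N => // i /= Ni.
exact/NA/(leq_trans Ni)/increasing_nat_ge.
Qed.

(* Strict monotonicity makes [t] injective, so that [wp] is well defined, and
   forces [wp s] for small [s] to be some [w k] with [k] large. *)
Lemma interpolating_adm_path {V : normedModType R} {t : nat -> R} {w : nat -> V} :
  (forall k, 0 < t k) -> (forall k, t k.+1 < t k) ->
  (fun k => t k *: w k) @ \oo --> 0 ->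
  exists2 wp : R -> V, adm_path wp & forall k, wp (t k) = w k.
Proof.
move=> t_gt0 tS tw0.
have t_lt : {homo t : i j / (i < j)%N >-> j < i}.
  by apply: homo_ltn => // y x z xy yz; exact: lt_trans yz xy.
have t_inj k k' : t k' = t k -> k' = k.
  by move=> tk; case: (ltngtP k' k) => [/t_lt|/t_lt|//]; rewrite tk ltxx.
pose wp s := if pselect (exists k, t k = s) is left ex then w (projT1 (cid ex)) else 0.
have wpE k : wp (t k) = w k.
  rewrite /wp; case: pselect => [ex|]; last by move=> nex; exfalso; apply: nex; exists k.
  by case: cid => k' /= /t_inj ->.
exists wp => //; apply/cvgrPdist_lt => e e0.
have [N _ Nw] := (cvgrPdist_lt _ _).1 tw0 e e0.
near=> s.
have sN : s < t N by near: s; exact: nbhs_right_lt.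
rewrite /wp; case: pselect => [ex|_]; last by rewrite scaler0 subrr normr0.
case: cid => k /= tk; rewrite -tk; apply: Nw => /=; rewrite leqNgt; apply/negP => /t_lt.
by rewrite tk => /(lt_trans sN); rewrite ltxx.
Unshelve. all: by end_near.
Qed.

Lemma cluster_subseq {V : normedModType R} {u : nat -> V} {p : V} :
  cluster (u @ \oo) p ->
  exists2 phi : nat -> nat, (forall i, (phi i < phi i.+1)%N) & (u \o phi) @ \oo --> p.
Proof.
move=> up.
have /choice [idx idxP] (Nj : nat * nat) :
    exists k, (Nj.1 <= k)%N /\ `|p - u k| < Nj.2.+1%:R^-1.
  have [] := up (u @` [set k | (Nj.1 <= k)%N]) (ball p Nj.2.+1%:R^-1).
  - by exists Nj.1 => // k /= Nk; exists k.
  - by apply: nbhsx_ballx; rewrite invr_gt0 ltr0n.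
  by move=> _ [[k Nk <-]]; rewrite -ball_normE; exists k.
pose fix phi i := if i is i'.+1 then idx ((phi i').+1, i) else idx (0, 0)%N.
exists phi => [i|]; first by have [] := idxP ((phi i).+1, i.+1).
apply: (cvg_dist_le cvg_harmonic); apply: nearW => i; rewrite distrC; apply: ltW.
by case: i => [|i] /=; [case: (idxP (0, 0)%N) | case: (idxP ((phi i).+1, i.+1))].
Qed.

Lemma bounded_rV_subseq {n : nat} {u : nat -> 'rV[R]_n} {B : R} :
  (forall k, `|u k| <= B) ->
  exists2 phi : nat -> nat, (forall i, (phi i < phi i.+1)%N) &
    exists l : 'rV[R]_n, (u \o phi) @ \oo --> l.
Proof.
move=> uB.
have ball_compact : compact [set v : 'rV[R]_n | `|v| <= B].
  apply: bounded_closed_compact.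
    exists B; split; first exact: num_real.
    by move=> M BM v /= vB; apply: le_trans vB (ltW BM).
  apply: (@preimage_closed _ _ (fun v : 'rV[R]_n => `|v|) [set x | x <= B]).
    by move=> v _; exact: norm_continuous.
  exact: closed_le.
have uB_ev : (u @ \oo) [set v | `|v| <= B] by exists 0%N => // k _; exact: uB.
have [p [_ up]] := ball_compact (u @ \oo) _ uB_ev.
by have [phi phiS ?] := cluster_subseq up; exists phi => //; exists p.
Qed.

Lemma edist_lt_exists {V : normedModType R} {x : V} {S : set V} {a : R} :
  (Defs.edist x S < a%:E)%E -> exists2 y, S y & `|x - y| < a.
Proof. by move=> /ereal_inf_lt [_ [y Sy <-]]; rewrite lte_fin; exists y. Qed.

Lemma edist_cvg0_seq {V : normedModType R} {v : nat -> V} {S : set V} :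
  (fun k => Defs.edist (v k) S) @ \oo --> 0%E ->
  exists2 vv : nat -> V, (forall k, S (vv k)) & (fun k => `|v k - vv k|) @ \oo --> 0.
Proof.
move=> /fine_cvgP [fin fine0].
have [N _ finN] := fin.
have [|y0 Sy0 _] := @edist_lt_exists _ (v N) S (fine (Defs.edist (v N) S) + 1).
  by rewrite -(fineK (finN N (leqnn N))) lte_fin ltrDl.
have /choice [vv vvP] k : exists y, S y /\ (Defs.edist (v k) S \is a fin_num ->
    `|v k - y| < fine (Defs.edist (v k) S) + k.+1%:R^-1).
  have [fk|] := boolP (Defs.edist (v k) S \is a fin_num); last by exists y0.
  have [|y Sy vy] := @edist_lt_exists _ (v k) S (fine (Defs.edist (v k) S) + k.+1%:R^-1).
    by rewrite -(fineK fk) lte_fin ltrDl invr_gt0 ltr0n.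
  by exists y.
exists vv => [k|]; first by case: (vvP k).
apply: (cvg_dist_le (b := fun k => fine (Defs.edist (v k) S) + k.+1%:R^-1)).
  by rewrite -[0]addr0; apply: cvgD; [exact: fine0 | exact: cvg_harmonic].
by exists N => // k /finN fk; rewrite subr0 normr_id; apply/ltW/(vvP k).2.
Qed.

End sequences.

Section directional_derivatives.
Context {R : realType} {V W : normedModType R}.

Lemma adm_path_cst (w : V) : adm_path (fun=> w).
Proof.
rewrite /adm_path -(scale0r w); apply: cvgZ; last exact: cvg_cst.
exact/cvg_at_right_filter/cvg_id.
Qed.

Lemma parabola_cvg {T : Type} {F : set_system T} {FF : Filter F}
    {s : T -> R} {w : T -> V} {x d : V} :
  s @ F --> 0 -> (fun j => s j *: w j) @ F --> 0 ->
  (fun j => x + s j *: d + (2^-1 * s j ^+ 2) *: w j) @ F --> x.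
Proof.
move=> s0 sw0; rewrite -[x in _ --> x]addr0 -[x in _ --> x + _]addr0.
apply: cvgD; first apply: cvgD; first exact: cvg_cst.
  by rewrite -(scale0r d); apply: cvgZ => //; exact: cvg_cst.
have -> : (fun j => (2^-1 * s j ^+ 2) *: w j) = (fun j => (2^-1 * s j) *: (s j *: w j)).
  by apply/funext => j; rewrite scalerA expr2 mulrA.
by rewrite -(scaler0 _ 0); apply: cvgZ => //; rewrite -(mulr0 2^-1); apply: cvgM => //;
  exact: cvg_cst.
Qed.

Lemma lipschitz_quotient_cvg {T : Type} {F : set_system T} {FF : Filter F}
    {g : V -> W} {x : V} {a b : T -> V} {lam : T -> R} {c : T -> W} {l : W} :
  loc_lipschitz_at g x -> a @ F --> x -> b @ F --> x ->
  (fun j => `|lam j| * `|b j - a j|) @ F --> 0 ->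
  (fun j => lam j *: (g (a j) - c j)) @ F --> l ->
  (fun j => lam j *: (g (b j) - c j)) @ F --> l.
Proof.
move=> [U [Ux [L gL]]] ax bx ab0 al.
apply: (cvg_dist_le
  (b := fun j => `|lam j *: (g (a j) - c j) - l| + L * (`|lam j| * `|b j - a j|))).
  rewrite -[0]addr0 -[X in _ + X](mulr0 L); apply: cvgD; last exact: cvgMr.
  by rewrite -(normr0 W) -(subrr l); apply: cvg_norm; apply: cvgB => //; exact: cvg_cst.
near=> j.
have Ua : U (a j) by near: j; exact: ax.
have Ub : U (b j) by near: j; exact: bx.
have -> : g (b j) - c j = (g (a j) - c j) + (g (b j) - g (a j)).
  by rewrite [RHS]addrC addrA subrK.
rewrite scalerDr addrAC (le_trans (ler_normD _ _)) // lerD2l normrZ mulrCA.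
by apply: ler_wpM2l => //; exact: gL.
Unshelve. all: by end_near.
Qed.

Lemma dir_deriv_seq {g : V -> W} {x d : V} {t : nat -> R} {dk : nat -> V} :
  loc_lipschitz_at g x -> has_dir_deriv g x d (dir_deriv g x d) ->
  (forall k, 0 < t k) -> t @ \oo --> 0 -> dk @ \oo --> d ->
  (fun k => dq1 g x (dk k) (t k)) @ \oo --> dir_deriv g x d.
Proof.
move=> glip gd t_gt0 t0 dkd.
have xtv_cvg (v : nat -> V) (u : V) : v @ \oo --> u -> (fun k => x + t k *: v k) @ \oo --> x.
  move=> vu; rewrite -[x in _ --> x]addr0; apply: cvgD; first exact: cvg_cst.
  by rewrite -(scale0r u); apply: cvgZ.
rewrite /dq1; apply: (lipschitz_quotient_cvg glip (xtv_cvg _ _ (cvg_cst d)) (xtv_cvg _ _ dkd)).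
  have -> : (fun k => `|(t k)^-1| * `|x + t k *: dk k - (x + t k *: d)|) =
      (fun k => `|dk k - d|).
    apply/funext => k; rewrite [x + _]addrC addrKA -scalerBr -normrZ scalerA.
    by rewrite mulVf ?gt_eqF // scale1r.
  by rewrite -(normr0 V) -(subrr d); apply: cvg_norm; apply: cvgB => //; exact: cvg_cst.
exact: (cvg_comp _ _ (cvg_pos_at_right t_gt0 t0) gd).
Qed.

Lemma dq2E (g : V -> W) (x d w : V) (s : R) : dq2 g x d w s =
  (2 / s ^+ 2) *: (g (x + s *: d + (2^-1 * s ^+ 2) *: w) - (g x + s *: dir_deriv g x d)).
Proof. by rewrite /dq2 opprD addrA. Qed.

Lemma dir_deriv2_seq {g : V -> W} {x d u : V} {t : nat -> R} {uk : nat -> V} :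
  loc_lipschitz_at g x -> sodd g x ->
  (forall k, 0 < t k) -> t @ \oo --> 0 -> uk @ \oo --> u ->
  (fun k => dq2 g x d (uk k) (t k)) @ \oo --> dir_deriv2 g x d u.
Proof.
move=> glip gsodd t_gt0 t0 uku.
have path_cvg (v : nat -> V) (w : V) : v @ \oo --> w ->
    (fun k => x + t k *: d + (2^-1 * t k ^+ 2) *: v k) @ \oo --> x.
  move=> vw; apply: (parabola_cvg t0).
  by rewrite -(scale0r w); apply: cvgZ.
under eq_fun do rewrite dq2E.
apply: (lipschitz_quotient_cvg glip (path_cvg _ _ (cvg_cst u)) (path_cvg _ _ uku)).
  have -> : (fun k => `|2 / t k ^+ 2| *
        `|x + t k *: d + (2^-1 * t k ^+ 2) *: uk k - (x + t k *: d + (2^-1 * t k ^+ 2) *: u)|) =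
      (fun k => `|uk k - u|).
    apply/funext => k; rewrite [_ + _ *: uk k]addrC addrKA -scalerBr -normrZ scalerA.
    have tk0 : t k != 0 by rewrite gt_eqF.
    by rewrite (_ : 2 / _ * _ = 1) ?scale1r //; field.
  by rewrite -(normr0 V) -(subrr u); apply: cvg_norm; apply: cvgB => //; exact: cvg_cst.
under eq_fun do rewrite -dq2E.
exact: (cvg_comp _ _ (cvg_pos_at_right t_gt0 t0) ((gsodd d).2 u)).
Qed.

Lemma dir_deriv2_lipschitz {g : V -> W} {x : V} : loc_lipschitz_at g x -> sodd g x ->
  exists2 L : R, 0 <= L &
    forall d w w', `|dir_deriv2 g x d w - dir_deriv2 g x d w'| <= L * `|w - w'|.
Proof.
move=> [U [Ux [L gL]]] gsodd; exists `|L| => // d w w'.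
have id0 : (fun s : R => s) @ 0^'+ --> 0 by exact/cvg_at_right_filter/cvg_id.
have path_U v : \forall s \near 0^'+, U (x + s *: d + (2^-1 * s ^+ 2) *: v).
  exact: (parabola_cvg id0 (adm_path_cst v)).
apply: (ler_cvg_to (a := 0^'+) (f := fun s => `|dq2 g x d w s - dq2 g x d w' s|)
    (g := fun=> `|L| * `|w - w'|)).
- exact: (cvg_norm (cvgB ((gsodd d).2 w) ((gsodd d).2 w'))).
- exact: cvg_cst.
near=> s.
have s_gt0 : 0 < s by near: s; exact: nbhs_right_gt.
have Uw : U (x + s *: d + (2^-1 * s ^+ 2) *: w) by near: s; exact: path_U.
have Uw' : U (x + s *: d + (2^-1 * s ^+ 2) *: w') by near: s; exact: path_U.
rewrite !dq2E -scalerBr opprB subrKA normrZ.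
apply: le_trans (ler_wpM2l (normr_ge0 _) (gL _ _ Uw Uw')) _.
rewrite [_ + _ *: w]addrC addrKA -scalerBr mulrCA -normrZ scalerA.
rewrite (_ : 2 / s ^+ 2 * _ = 1) ?scale1r; last by field; rewrite gt_eqF.
by apply: ler_wpM2r => //; exact: ler_norm.
Unshelve. all: by end_near.
Qed.

Lemma dir_deriv2_scale_cvg0 {g : V -> W} {x d : V} {t : nat -> R} {w : nat -> V} :
  loc_lipschitz_at g x -> sodd g x -> t @ \oo --> 0 ->
  (fun k => t k *: w k) @ \oo --> 0 ->
  (fun k => t k *: dir_deriv2 g x d (w k)) @ \oo --> 0.
Proof.
move=> glip gsodd t0 tw0; have [L _ g2L] := dir_deriv2_lipschitz glip gsodd.
apply: (cvg_dist_le (b := fun k => `|t k| * `|dir_deriv2 g x d 0| + L * `|t k *: w k|)).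
  have t_abs0 : (fun k => `|t k|) @ \oo --> `|0 : R| by exact: cvg_norm.
  have tw_abs0 : (fun k => `|t k *: w k|) @ \oo --> `|0 : V| by exact: cvg_norm.
  rewrite normr0 in t_abs0; rewrite normr0 in tw_abs0.
  suff : (fun k => `|t k| * `|dir_deriv2 g x d 0| + L * `|t k *: w k|) @ \oo -->
    0 * `|dir_deriv2 g x d 0| + L * 0 by rewrite mul0r mulr0 addr0.
  by apply: cvgD; [exact: cvgMl | exact: cvgMr].
apply: nearW => k; rewrite subr0 !normrZ mulrCA -mulrDr.
apply: ler_wpM2l => //; rewrite -[X in `|X|](subrK (dir_deriv2 g x d 0)) addrC.
by apply: le_trans (ler_normD _ _) _; rewrite lerD2l -[X in _ * `|X|]subr0.
Qed.

Lemma tangent_cone_dir_deriv {K : set W} {G : V -> W} {x d : V} {t : nat -> R}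
    {dk : nat -> V} :
  loc_lipschitz_at G x -> has_dir_deriv G x d (dir_deriv G x d) ->
  (forall k, 0 < t k) -> t @ \oo --> 0 -> dk @ \oo --> d ->
  (forall k, K (G (x + t k *: dk k))) -> tangent_cone K (G x) (dir_deriv G x d).
Proof.
move=> Glip Gd t_gt0 t0 dkd Kx.
exists t, (fun k => dq1 G x (dk k) (t k)); do 3!split => //.
  exact: dir_deriv_seq.
by move=> k; rewrite /dq1 scalerA mulfV ?gt_eqF // scale1r subrKC.
Qed.

Lemma tangent2_dir_deriv2 {K : set W} {G : V -> W} {x d u : V} {t : nat -> R}
    {uk : nat -> V} :
  loc_lipschitz_at G x -> sodd G x ->
  (forall k, 0 < t k) -> t @ \oo --> 0 -> uk @ \oo --> u ->
  (forall k, K (G (x + t k *: d + (2^-1 * t k ^+ 2) *: uk k))) ->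
  tangent2 K (G x) (dir_deriv G x d) (dir_deriv2 G x d u).
Proof.
move=> Glip Gsodd t_gt0 t0 uku Kx.
exists t, (fun k => dq2 G x d (uk k) (t k)); do 3!split => //.
  exact: dir_deriv2_seq.
move=> k; rewrite dq2E scalerA (_ : 2^-1 * _ * _ = 1) ?scale1r ?subrKC //.
by field; rewrite gt_eqF.
Qed.

Lemma parabolic_decomposition (x : V) {d : V} {t : nat -> R} {dk : nat -> V} :
  (forall k, 0 < t k) -> dk @ \oo --> d ->
  exists2 w : nat -> V, (fun k => t k *: w k) @ \oo --> 0 &
    forall k, x + t k *: dk k = x + t k *: d + (2^-1 * t k ^+ 2) *: w k.
Proof.
move=> t_gt0 dkd; exists (fun k => (2 / t k) *: (dk k - d)) => [|k].
  have -> : (fun k => t k *: ((2 / t k) *: (dk k - d))) = (fun k => 2 *: (dk k - d)).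
    by apply/funext => k; rewrite scalerA mulrCA mulfV ?mulr1 ?gt_eqF.
  rewrite -(scaler0 _ 2) -(subrr d); apply: cvgZ; first exact: cvg_cst.
  by apply: cvgB => //; exact: cvg_cst.
rewrite scalerA (_ : 2^-1 * _ * _ = t k); last by field; rewrite gt_eqF.
by rewrite scalerBr -addrA subrKC.
Qed.

Lemma gph_dir_deriv2_near_tangent2 {K : set W} {G : V -> W} {x d : V} {t : nat -> R}
    {w : nat -> V} :
  so_gph_regular G x -> outer_so_regular K (G x) (dir_deriv G x d) ->
  (forall k, 0 < t k) -> (forall k, t k.+1 < t k) -> t @ \oo --> 0 ->
  (fun k => t k *: w k) @ \oo --> 0 ->
  (forall k, K (G (x + t k *: d + (2^-1 * t k ^+ 2) *: w k))) ->
  exists2 vv : nat -> W, (forall k, tangent2 K (G x) (dir_deriv G x d) (vv k)) &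
    (fun k => `|dir_deriv2 G x d (w k) - vv k|) @ \oo --> 0.
Proof.
move=> [Glip [Gsodd Greg]] outer t_gt0 tS t0 tw0 Kx.
have [wp wp_adm wpE] := interpolating_adm_path t_gt0 tS tw0.
have [r [r_o2 rE]] := Greg d wp wp_adm.
pose rho k := 2 *: ((t k ^+ 2)^-1 *: r (t k)).
have rho0 : rho @ \oo --> 0.
  rewrite -(scaler0 _ 2); apply: cvgZ; first exact: cvg_cst.
  exact: (cvg_comp _ _ (cvg_pos_at_right t_gt0 t0) r_o2).
pose v k := dir_deriv2 G x d (w k) + rho k.
have Kv k : K (G x + t k *: dir_deriv G x d + (2^-1 * t k ^+ 2) *: v k).
  rewrite scalerDr addrA /rho !scalerA (_ : _ * 2 * _ = 1) ?scale1r.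
    by rewrite -wpE -rE ?wpE // ltW.
  by field; rewrite gt_eqF.
have tv0 : (fun k => t k *: v k) @ \oo --> 0.
  under eq_fun do rewrite scalerDr.
  rewrite -[0]addr0; apply: cvgD; first exact: dir_deriv2_scale_cvg0.
  by rewrite -(scale0r 0); apply: cvgZ.
have [vv vvT vv_v] := edist_cvg0_seq (outer t v t_gt0 t0 tv0 Kv).
exists vv => //; apply: (cvg_dist_le (b := fun k => `|v k - vv k| + `|rho k|)).
  rewrite -[0]addr0; apply: cvgD => //; rewrite -(normr0 W); exact: cvg_norm.
apply: nearW => k; rewrite subr0 normr_id -(addrK (rho k) (dir_deriv2 G x d (w k))).
by rewrite -/(v k) addrAC ler_normB.
Qed.

End directional_derivatives.

Section real_valued.
Context {R : realType} {V : normedModType R}.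

Lemma descent_dir_deriv_le0 {f : V -> R^o} {x d : V} {t e : nat -> R} {dk : nat -> V} :
  loc_lipschitz_at f x -> has_dir_deriv f x d (dir_deriv f x d) ->
  (forall k, 0 < t k) -> t @ \oo --> 0 -> dk @ \oo --> d -> e @ \oo --> 0 ->
  (forall k, f (x + t k *: dk k) <= f x + e k * t k ^+ 2) -> dir_deriv f x d <= 0.
Proof.
move=> flip fd t_gt0 t0 dkd e0 fx.
have et0 : (fun k => e k * t k) @ \oo --> 0 by rewrite -(mulr0 0); exact: cvgM.
apply: (ler_cvg_to (dir_deriv_seq flip fd t_gt0 t0 dkd) et0).
apply: nearW => k; rewrite /dq1 -[_ *: _]/(_ * _) ler_pdivrMl // lerBlDl mulrCA -expr2.
exact: fx.
Qed.

Lemma epi_dir_deriv2_le {f : V -> R^o} {x d : V} {t e : nat -> R} {w : nat -> V} :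
  so_epi_regular f x -> 0 <= dir_deriv f x d ->
  (forall k, 0 < t k) -> (forall k, t k.+1 < t k) -> t @ \oo --> 0 ->
  (fun k => t k *: w k) @ \oo --> 0 -> e @ \oo --> 0 ->
  (forall k, f (x + t k *: d + (2^-1 * t k ^+ 2) *: w k) <= f x + e k * t k ^+ 2) ->
  exists2 eps : nat -> R, eps @ \oo --> 0 & forall k, dir_deriv2 f x d (w k) <= eps k.
Proof.
move=> [_ [_ freg]] fd_ge0 t_gt0 tS t0 tw0 e0 fx.
have [wp wp_adm wpE] := interpolating_adm_path t_gt0 tS tw0.
have [r [r_o2 rE]] := freg d wp wp_adm.
pose rho k := (t k ^+ 2)^-1 * r (t k).
exists (fun k => 2 * e k - 2 * rho k) => [|k].
  rewrite -[0](subrr (2 * 0)); apply: cvgB; apply: cvgMr => //.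
  exact: (cvg_comp _ _ (cvg_pos_at_right t_gt0 t0) r_o2).
have t2_gt0 : 0 < t k ^+ 2 by rewrite exprn_gt0.
have r_tk : r (t k) = t k ^+ 2 * rho k by rewrite /rho mulrA mulfV ?mul1r ?gt_eqF.
have tfd_ge0 : 0 <= t k * dir_deriv f x d by rewrite mulr_ge0 // ltW.
have := rE (t k) (ltW (t_gt0 k)); rewrite wpE r_tk => /le_trans/(_ (fx k)).
by nra.
Qed.

End real_valued.

Section metric_subregularity.
Context {R : realType} {W : normedModType R}.

Lemma mscq_parabolic_correction {V : normedModType R} {K : set W} {G : V -> W}
    {xs d : V} (w : V) {v : W} {U : set V} {kappa eta : R} {t : nat -> R} {vk : nat -> W} :
  sodd G xs -> nbhs xs U -> 0 <= kappa ->
  (forall x, U x -> (Defs.edist x [set y | K (G y)] <= kappa%:E * Defs.edist (G x) K)%E) ->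
  0 < eta -> (forall k, 0 < t k) -> t @ \oo --> 0 -> vk @ \oo --> v ->
  (forall k, K (G xs + t k *: dir_deriv G xs d + (2^-1 * t k ^+ 2) *: vk k)) ->
  \forall k \near \oo, exists2 u, K (G (xs + t k *: d + (2^-1 * t k ^+ 2) *: u)) &
    `|u - w| < kappa * `|dir_deriv2 G xs d w - v| + eta.
Proof.
move=> Gsodd Ux kappa_ge0 mscq eta_gt0 t_gt0 t0 vkv Kvk.
set a := `|dir_deriv2 G xs d w - v|.
pose p k := xs + t k *: d + (2^-1 * t k ^+ 2) *: w.
have Up : \forall k \near \oo, U (p k).
  apply: (parabola_cvg (w := fun=> w) t0 _) Ux.
  by rewrite -(scale0r w); apply: cvgZ => //; exact: cvg_cst.
pose c k := `|dq2 G xs d w (t k) - vk k|.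
have c_a : c @ \oo --> a.
  apply: cvg_norm; apply: cvgB => //.
  exact: (cvg_comp _ _ (cvg_pos_at_right t_gt0 t0) ((Gsodd d).2 w)).
have c_near : \forall k \near \oo, kappa * c k < kappa * a + eta.
  move/(cvgMr (a := kappa))/cvgrPdist_lt/(_ eta eta_gt0) : c_a; apply: filterS => k.
  by rewrite distrC => /(le_lt_trans (ler_norm _)); rewrite ltrBlDl.
near=> k.
have tk_gt0 := t_gt0 k; set s := 2^-1 * t k ^+ 2.
have s_gt0 : 0 < s by rewrite mulr_gt0 ?invr_gt0 ?exprn_gt0.
have sE : s * (2 / t k ^+ 2) = 1 by rewrite /s; field; rewrite gt_eqF.
have dGK : (Defs.edist (G (p k)) K <= (s * c k)%:E)%E.
  apply: ereal_inf_lbound; exists (G xs + t k *: dir_deriv G xs d + s *: vk k) => //.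
  suff -> : G (p k) - (G xs + t k *: dir_deriv G xs d + s *: vk k) =
      s *: (dq2 G xs d w (t k) - vk k) by rewrite normrZ gtr0_norm.
  by rewrite scalerBr dq2E scalerA sE scale1r opprD addrA.
have dPsi : (Defs.edist (p k) [set y | K (G y)] < (s * (kappa * a + eta))%:E)%E.
  apply: le_lt_trans (mscq _ _) _; first by near: k.
  apply: le_lt_trans (lee_wpmul2l _ dGK) _; first by rewrite lee_fin.
  by rewrite -EFinM lte_fin mulrCA ltr_pM2l //; near: k.
have [y Ky py] := edist_lt_exists dPsi.
exists (w + (2 / t k ^+ 2) *: (y - p k)).
  by rewrite scalerDr addrA scalerA sE scale1r subrKC.
rewrite addrAC subrr add0r normrZ gtr0_norm ?divr_gt0 ?exprn_gt0 // distrC.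
by rewrite -(ltr_pM2l s_gt0) mulrA sE mul1r.
Unshelve. all: by end_near.
Qed.

Lemma mscq_tangent2_perturb {n : nat} {K : set W} {G : 'rV[R]_n -> W} {xs : 'rV[R]_n} :
  loc_lipschitz_at G xs -> sodd G xs -> MSCQ G K xs ->
  exists2 kappa : R, 0 <= kappa & forall d w v eta, 0 < eta ->
    tangent2 K (G xs) (dir_deriv G xs d) v ->
    exists2 u, tangent2 K (G xs) (dir_deriv G xs d) (dir_deriv2 G xs d u) &
      `|u - w| <= kappa * `|dir_deriv2 G xs d w - v| + eta.
Proof.
move=> Glip Gsodd [U [Ux [kappa [kappa_gt0 mscq]]]].
exists kappa => [|d w v eta eta_gt0 [t [vk [t_gt0 [t0 [vkv Kvk]]]]]]; first exact: ltW.
set B := kappa * _ + eta.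
have [N _ corr] := mscq_parabolic_correction w Gsodd Ux (ltW kappa_gt0) mscq eta_gt0
  t_gt0 t0 vkv Kvk.
pose tN k := t (k + N)%N.
have /choice [u uP] k :
    exists u, K (G (xs + tN k *: d + (2^-1 * tN k ^+ 2) *: u)) /\ `|u - w| < B.
  by have [u] := corr (k + N)%N (leq_addl _ _); exists u.
have u_bd k : `|u k| <= `|w| + B.
  by rewrite -[u k](subrKC w) (le_trans (ler_normD _ _)) // lerD2l ltW // (uP k).2.
have [phi phiS [us u_us]] := bounded_rV_subseq u_bd.
exists us.
  apply: (tangent2_dir_deriv2 Glip Gsodd (t := tN \o phi) _ _ u_us) => [i||i].
  - exact: t_gt0.
  - by apply: cvg_subseq => //; move: t0; rewrite -(cvg_shiftn N).
  - exact: (uP (phi i)).1.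
have uw_cvg : (fun i => `|u (phi i) - w|) @ \oo --> `|us - w|.
  exact: (cvg_norm (cvgB u_us (cvg_cst w))).
apply: (ler_cvg_to uw_cvg (cvg_cst B)); apply: nearW => i.
exact/ltW/(uP (phi i)).2.
Qed.

Lemma so_value_nonpos {n : nat} {K : set W} {f : 'rV[R]_n -> R^o} {G : 'rV[R]_n -> W}
    {xs d : 'rV[R]_n} {w : nat -> 'rV[R]_n} {eps : nat -> R} {vv : nat -> W} :
  loc_lipschitz_at f xs -> sodd f xs -> loc_lipschitz_at G xs -> sodd G xs ->
  MSCQ G K xs -> eps @ \oo --> 0 -> (forall k, dir_deriv2 f xs d (w k) <= eps k) ->
  (forall k, tangent2 K (G xs) (dir_deriv G xs d) (vv k)) ->
  (fun k => `|dir_deriv2 G xs d (w k) - vv k|) @ \oo --> 0 ->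
  (so_value f G K xs d <= 0)%E.
Proof.
move=> flip fsodd Glip Gsodd mscq eps0 f2w vvT vvw.
have [kappa kappa_ge0 perturb] := mscq_tangent2_perturb Glip Gsodd mscq.
have [L L_ge0 f2L] := dir_deriv2_lipschitz flip fsodd.
pose b k := eps k + L * (kappa * `|dir_deriv2 G xs d (w k) - vv k| + k.+1%:R^-1).
have b0 : b @ \oo --> 0.
  suff : b @ \oo --> 0 + L * (kappa * 0 + 0) by rewrite !(mulr0, addr0).
  by apply: cvgD => //; apply: cvgMr; apply: cvgD; [exact: cvgMr | exact: cvg_harmonic].
have so_le k : (so_value f G K xs d <= (b k)%:E)%E.
  have hk_gt0 : 0 < k.+1%:R^-1 :> R by rewrite invr_gt0.
  have [u uT uw] := perturb d (w k) (vv k) _ hk_gt0 (vvT k).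
  apply: le_trans (ereal_inf_lbound _) _; first by exists u.
  rewrite lee_fin -(subrK (dir_deriv2 f xs d (w k)) (dir_deriv2 f xs d u)) addrC.
  apply: lerD; first exact: f2w.
  apply: le_trans (ler_norm _) _; apply: le_trans (f2L _ _ _) _.
  exact: ler_wpM2l.
apply/lee_addgt0Pr => e e_gt0; rewrite add0e.
have [N _ bN] := (cvgrPdist_lt _ _).1 b0 e e_gt0.
apply: le_trans (so_le N) _; rewrite lee_fin.
by have := bN N (leqnn N); rewrite /= sub0r normrN => /(le_lt_trans (ler_norm _))/ltW.
Qed.

End metric_subregularity.

Section growth.
Context {R : realType}.

Definition so_growth {V : normedModType R} (S : set V) (f : V -> R^o) (xs : V) :=
  exists c : R, 0 < c /\ exists N, nbhs xs N /\
    forall x, S x -> N x -> f xs + c * `|x - xs| ^+ 2 <= f x.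

Lemma growth_failure_points {V : normedModType R} {S : set V} {f : V -> R^o} {xs : V} :
  ~ so_growth S f xs ->
  exists x : nat -> V,
    [/\ forall k, S (x k) /\ f (x k) < f xs + k.+1%:R^-1 * `|x k - xs| ^+ 2,
        forall k, 0 < `|x k - xs|, forall k, `|x k.+1 - xs| < `|x k - xs| &
        forall k, `|x k - xs| < k.+1%:R^-1].
Proof.
move=> no_growth.
have /choice [X XP] (kr : nat * R) : exists x, 0 < kr.2 ->
    [/\ S x /\ f x < f xs + kr.1.+1%:R^-1 * `|x - xs| ^+ 2, 0 < `|x - xs| & `|x - xs| < kr.2].
  case: kr => k r /=; have [r_gt0|] := ltrP 0 r; last by exists xs.
  apply: contrapT => no_pick; apply: no_growth.
  exists k.+1%:R^-1; split; first by rewrite invr_gt0.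
  exists (ball xs r); split; first exact: nbhsx_ballx.
  move=> x Sx; rewrite -ball_normE /= distrC => xr; rewrite leNgt; apply/negP => fx.
  apply: no_pick; exists x => _; split => //.
  rewrite normr_gt0 subr_eq0; apply: contraTneq fx => ->.
  by rewrite subrr normr0 expr0n mulr0 addr0 ltxx.
pose fix x k := if k is k'.+1 then X (k, Num.min `|x k' - xs| k.+1%:R^-1) else X (0%N, 1).
have r_gt0 k : 0 < `|x k - xs| -> 0 < Num.min `|x k - xs| k.+2%:R^-1.
  by move=> xk_gt0; rewrite lt_min xk_gt0 invr_gt0 ltr0n.
have xP k : [/\ S (x k) /\ f (x k) < f xs + k.+1%:R^-1 * `|x k - xs| ^+ 2,
    0 < `|x k - xs| & `|x k - xs| < k.+1%:R^-1].
  elim: k => [|k [_ /r_gt0 rk_gt0 _]].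
    by have [? ? ?] := XP (0%N, 1) ltr01; split => //; rewrite invr1.
  have [? ? xr] := XP (k.+1, _) rk_gt0.
  by split => //; apply: lt_le_trans xr _; rewrite ge_min lexx orbT.
exists x; split => k; try by case: (xP k).
have [_ /r_gt0 rk_gt0 _] := xP k; have [_ _ xr] := XP (k.+1, _) rk_gt0.
by apply: lt_le_trans xr _; rewrite ge_min lexx.
Qed.

Lemma growth_failure_seq {n : nat} {S : set 'rV[R]_n} {f : 'rV[R]_n -> R^o}
    {xs : 'rV[R]_n} :
  ~ so_growth S f xs ->
  exists (t : nat -> R) (dk : nat -> 'rV[R]_n) (d : 'rV[R]_n),
    [/\ forall k, 0 < t k /\ t k.+1 < t k, t @ \oo --> 0, dk @ \oo --> d, d != 0 &
        forall k, S (xs + t k *: dk k) /\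
          f (xs + t k *: dk k) <= f xs + k.+1%:R^-1 * t k ^+ 2].
Proof.
move=> /growth_failure_points [x [xP x_gt0 xS x_lt]].
pose t k := `|x k - xs|; pose u k := (t k)^-1 *: (x k - xs).
have u1 k : `|u k| = 1 by rewrite normrZ normfV normr_id mulVf // gt_eqF.
have xE k : x k = xs + t k *: u k.
  by rewrite /u scalerA mulfV ?scale1r ?subrKC // (gt_eqF (x_gt0 k)).
have t_lt : {homo t : i j / (i < j)%N >-> j < i}.
  by apply: homo_ltn => // y x' z xy yz; exact: lt_trans yz xy.
have u_le1 k : `|u k| <= 1 by rewrite u1.
have [phi phiS [d ud]] := bounded_rV_subseq u_le1.
exists (t \o phi), (u \o phi), d; split => //.
- by move=> k; split; [exact: x_gt0 | exact/t_lt/phiS].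
- apply: cvg_subseq => //; apply: (cvg_dist_le cvg_harmonic); apply: nearW => k.
  by rewrite subr0 normr_id; exact/ltW/x_lt.
- rewrite -normr_gt0; apply: lt_le_trans ltr01 _.
  have ud_norm : (fun k => `|u (phi k)|) @ \oo --> `|d| by exact: cvg_norm.
  by apply: (ler_cvg_to (cvg_cst (1 : R)) ud_norm); apply: nearW => k; rewrite u1.
move=> k; rewrite /= -xE; have [Sx fx] := xP (phi k); split => //.
apply/ltW/(lt_le_trans fx); rewrite lerD2l ler_wpM2r ?exprn_ge0 //.
by rewrite lef_pV2 ?posrE ?ltr0n // ler_nat ltnS increasing_nat_ge.
Qed.

End growth.

Theorem corollary3p1 (R : realType) (n m : nat) (K : set 'rV[R]_m)
  (f : 'rV[R]_n -> R^o) (G : 'rV[R]_n -> 'rV[R]_m) (xs : 'rV[R]_n) :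
  closed K ->
  K (G xs) ->
  so_epi_regular f xs ->
  so_gph_regular G xs ->
  MSCQ G K xs ->
  (forall d, tangent_cone K (G xs) (dir_deriv G xs d) ->
     outer_so_regular K (G xs) (dir_deriv G xs d)) ->
  (forall d, tangent_cone K (G xs) (dir_deriv G xs d) -> 0 <= dir_deriv f xs d) ->
  (forall d, crit_cone f G K xs d -> d != 0 -> (0 < so_value f G K xs d)%E) ->
  exists c : R, 0 < c /\ exists N, nbhs xs N /\
    forall x, K (G x) -> N x -> f xs + c * `|x - xs| ^+ 2 <= f x.
Proof.
move=> _ _ f_reg G_reg mscq outer f1_ge0 so_pos.
have [[f_lip [f_sodd _]] [G_lip [G_sodd _]]] := (f_reg, G_reg).
suff : so_growth [set x | K (G x)] f xs by [].
apply: contrapT => /growth_failure_seq [t [dk [d [t_dec t0 dkd d0 descent]]]].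
have t_gt0 k : 0 < t k := (t_dec k).1.
have tS k : t k.+1 < t k := (t_dec k).2.
have [w tw0 xE] := parabolic_decomposition xs t_gt0 dkd.
have tanG : tangent_cone K (G xs) (dir_deriv G xs d).
  by apply: (tangent_cone_dir_deriv G_lip (G_sodd d).1 t_gt0 t0 dkd) => k; case: (descent k).
have crit : crit_cone f G K xs d.
  split => //; apply: (descent_dir_deriv_le0 f_lip (f_sodd d).1 t_gt0 t0 dkd cvg_harmonic).
  by move=> k; case: (descent k).
have [eps eps0 f2w] :
    exists2 eps : nat -> R, eps @ \oo --> 0 & forall k, dir_deriv2 f xs d (w k) <= eps k.
  apply: (epi_dir_deriv2_le f_reg (f1_ge0 d tanG) t_gt0 tS t0 tw0 cvg_harmonic).
  by move=> k; rewrite -xE; case: (descent k).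
have [vv vvT vvw] : exists2 vv : nat -> 'rV[R]_m,
    (forall k, tangent2 K (G xs) (dir_deriv G xs d) (vv k)) &
    (fun k => `|dir_deriv2 G xs d (w k) - vv k|) @ \oo --> 0.
  apply: (gph_dir_deriv2_near_tangent2 G_reg (outer d tanG) t_gt0 tS t0 tw0).
  by move=> k; rewrite -xE; case: (descent k).
have := so_value_nonpos f_lip f_sodd G_lip G_sodd mscq eps0 f2w vvT vvw.
by rewrite leNgt so_pos.
Qed.
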